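(* Let $\mu>0$, let $V^{*}_{\mu}$ be a fixed point of the quasi-optimal Bellman operator $\mathcal{B}_{\mu}$, and let $Q^{*}_{\mu}(s,a)=\mathbb{E}_{S'\sim\mathbf{P}(\cdot\mid s,a)}[R(S',s,a)+\gamma V^{*}_{\mu}(S')]$. Suppose that for each $s$ the supremum defining $\mathcal{B}_{\mu}V^{*}_{\mu}(s)$ is attained by the induced policy $\pi^{*}_{\mu}(\cdot\mid s)\in\Pi_{\mathbf{C}}$ of the form $$\pi^{*}_{\mu}(a\mid s)=\Big(\frac{Q^{*}_{\mu}(s,a)}{2\mu}-\frac{\int_{\mathcal{W}_s}Q^{*}_{\mu}(s,a')\,da'}{2\mu\,\sigma(\mathcal{W}_s)}+\frac{1}{\sigma(\mathcal{W}_s)}\Big)^{+},$$ where $\mathcal{W}_s$ is the support of $\pi^{*}_{\mu}(\cdot\mid s)$. Then there exist functions $\eta:\mathcal{S}\to[-\mu\mathbf{C},0]$ and $\varpi:\mathcal{S}\times\mathcal{A}\to[0,\infty)$ with $\varpi(s,a)\,\pi^{*}_{\mu}(a\mid s)=0$ for all $(s,a)$, such that for every $s\in\mathcal{S}$, $a\in\mathcal{A}$, $$\mathbb{E}_{S'\sim\mathbf{P}(\cdot\mid s,a)}\big[R(S',s,a)+\gamma V^{*}_{\mu}(S')\big]-\mu\big(2\pi^{*}_{\mu}(a\mid s)-1\big)-\eta(s)+\varpi(s,a)=V^{*}_{\mu}(s).$$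
   Context: Consider a Markov decision process with state space $\mathcal{S}$, continuous action space $\mathcal{A}\subseteq\mathbb{R}$ ($\sigma$ = Lebesgue measure), transition kernel $\mathbf{P}$, bounded reward $R(s',s,a)$, discount $\gamma\in[0,1)$. $\Pi_{\mathbf{C}}$ is the class of conditional densities $\pi(\cdot\mid s)$ on $\mathcal{A}$ with $\pi(a\mid s)\le\mathbf{C}$ for all $s,a$ (standing assumption: all policies lie in $\Pi_{\mathbf{C}}$). For bounded $V$, $Q_V(s,a)=\mathbb{E}_{S'\sim\mathbf{P}(\cdot\mid s,a)}[R(S',s,a)+\gamma V(S')]$ and $\mathcal{B}_{\mu}V(s)=\sup_{\pi\in\Pi_{\mathbf{C}}}\int_{\mathcal{A}}[Q_V(s,a)\pi(a\mid s)+\mu(\pi(a\mid s)-\pi(a\mid s)^2)]\,da$. $x^+=\max(x,0)$. *)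

From HB Require Import structures.
From mathcomp Require Import all_boot all_order all_algebra.
From mathcomp Require Import all_classical all_reals all_analysis.
From mathcomp Require Import measurable_realfun.
Set Implicit Arguments.
Unset Strict Implicit.
Unset Printing Implicit Defensive.
Import Order.TTheory GRing.Theory Num.Theory.
Import numFieldNormedType.Exports.

Local Open Scope classical_set_scope.
Local Open Scope ring_scope.

Definition Qfun (R : realType) (d : measure_display) (S : measurableType d)
  (P : S -> R -> probability S R) (r : S -> S -> R -> R) (gamma : R)
  (V : S -> R) (s : S) (a : R) : R :=
  Rintegral (P s a) setT (fun s' => r s' s a + gamma * V s').

Definition in_PiC (R : realType) (d : measure_display) (S : measurableType d)
  (A : set R) (C : R) (pi : S -> R -> R) : Prop :=
  forall s, measurable_fun A (pi s) /\
    (forall a, A a -> 0 <= pi s a <= C) /\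
    (\int[@lebesgue_measure R]_(a in A) (pi s a)%:E = 1)%E.

Definition bellman_obj (R : realType) (d : measure_display) (S : measurableType d)
  (A : set R) (mu : R) (Q : S -> R -> R) (pi : S -> R -> R) (s : S) : \bar R :=
  (\int[@lebesgue_measure R]_(a in A)
      (Q s a * pi s a + mu * (pi s a - pi s a ^+ 2))%:E)%E.

Definition bellman (R : realType) (d : measure_display) (S : measurableType d)
  (P : S -> R -> probability S R) (r : S -> S -> R -> R) (gamma : R)
  (A : set R) (C mu : R) (V : S -> R) (s : S) : \bar R :=
  ereal_sup [set bellman_obj A mu (Qfun P r gamma V) pi s
            | pi in [set pi | in_PiC A C pi]].

Definition supp (R : realType) (d : measure_display) (S : measurableType d)
  (A : set R) (pi : S -> R -> R) (s : S) : set R :=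
  [set a | A a /\ 0 < pi s a].

From HB Require Import structures.
From mathcomp Require Import all_boot all_order all_algebra.
From mathcomp Require Import all_classical all_reals all_analysis.
From mathcomp Require Import measurable_realfun.
From mathcomp Require Import ring lra.
Import Order.TTheory GRing.Theory Num.Theory.
Import numFieldNormedType.Exports.
Local Open Scope classical_set_scope.
Local Open Scope ring_scope.

(* With [c := (\int_W Q - 2 mu) / |W|], the induced policy is the positive part
   of [(Q - c) / (2 mu)]; this is complementary slackness between
   [pi] and [varpi := c + 2 mu pi - Q].  On the support [Q = 2 mu pi + c], so
   the Bellman objective [\int (Q pi + mu (pi - pi^2))] collapses to
   [c + mu + mu \int pi^2], whence [V = c + mu + mu \int pi^2]; the multiplier
   [eta := - mu \int pi^2] lies in [[-mu C, 0]] since [0 <= pi <= C] and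
   [\int pi = 1]. *)

Lemma induced_policyE (R : numFieldType) (mu Q I m : R) : mu != 0 ->
  Q / (2 * mu) - I / (2 * mu * m) + 1 / m = (Q - (I / m - 2 * mu / m)) / (2 * mu).
Proof.
(* [m] may be [0]; making [m^-1] opaque keeps [field] from asking for [m != 0]. *)
move=> mu0; rewrite (invfM (2 * mu) m); set mi := m^-1.
by field; rewrite mu0.
Qed.

Lemma pos_part_slackness (R : realFieldType) (mu Q c : R) : 0 < mu ->
  let p := Num.max 0 ((Q - c) / (2 * mu)) in
  (p = 0 /\ Q <= c) \/ Q = 2 * mu * p + c.
Proof.
move=> mu0 p; have mu2 : 0 < 2 * mu by rewrite mulr_gt0.
have [y_le0|y_gt0] := leP ((Q - c) / (2 * mu)) 0.
- left; split; first by rewrite /p max_l.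
  by move: y_le0; rewrite pmulr_lle0 ?invr_gt0 // subr_le0.
- right; rewrite /p max_r ?ltW // mulrC divfK ?gt_eqF //; ring.
Qed.

Section bounded_density.
Context {d : measure_display} {T : measurableType d} {R : realType}.
Context {m : {measure set T -> \bar R}} {D : set T} {f : T -> R} {C : R}.
Hypotheses (mD : measurable D) (mf : measurable_fun D f)
  (f_bounds : forall x, D x -> 0 <= f x <= C)
  (int_f : (\int[m]_(x in D) (f x)%:E = 1)%E).

Let f_ge0 x : D x -> 0 <= f x.
Proof. by move/f_bounds/andP=> []. Qed.

Let f_leC x : D x -> f x <= C.
Proof. by move/f_bounds/andP=> []. Qed.

Let Rintegral_f : \int[m]_(x in D) f x = 1.
Proof. by rewrite /Rintegral int_f. Qed.

Lemma density_integrable : m.-integrable D (EFin \o f).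
Proof.
apply/integrableP; split; first exact/measurable_EFinP.
under eq_integral => x /[!inE] Dx do rewrite /= ger0_norm ?f_ge0 //.
by rewrite int_f ltry.
Qed.

Lemma sqr_density_integrable : m.-integrable D (EFin \o (fun x => f x ^+ 2)).
Proof.
apply: (le_integrable mD _ _ (integrableZl mD C density_integrable)).
  by apply/measurable_EFinP; exact: measurable_funX.
move=> x Dx /=; have C0 : 0 <= C := le_trans (f_ge0 x Dx) (f_leC x Dx).
rewrite lee_fin !ger0_norm ?sqr_ge0 ?mulr_ge0 ?f_ge0 //.
by rewrite expr2 ler_wpM2r ?f_ge0 ?f_leC.
Qed.

Lemma Rintegral_sqr_density_bounds :
  0 <= \int[m]_(x in D) (f x ^+ 2) <= C.
Proof.
apply/andP; split; first by apply: Rintegral_ge0 => x _; exact: sqr_ge0.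
rewrite -[C]mulr1 -Rintegral_f -RintegralZl //; last exact: density_integrable.
apply: le_Rintegral => //; first exact: sqr_density_integrable.
  exact: integrableZl density_integrable.
by move=> x Dx; rewrite expr2 ler_wpM2r ?f_ge0 ?f_leC.
Qed.

Lemma integral_affine_sqr_density (k c : R) :
  (\int[m]_(x in D) (k * f x + c * f x ^+ 2)%:E
   = (k + c * \int[m]_(x in D) (f x ^+ 2))%:E)%E.
Proof.
have i2 := sqr_density_integrable.
rewrite (@eq_integral _ _ _ m D
  (fun x => k%:E * (EFin \o f) x + c%:E * (EFin \o (fun x => (f x ^+ 2)%R)) x)%E);
  last by move=> x _; rewrite /= EFinD !EFinM.
rewrite integralD //; [|exact: integrableZl density_integrable|exact: integrableZl].
rewrite !integralZl //; last exact: density_integrable.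
by rewrite int_f mule1 -(fineK (integrable_fin_num mD i2)).
Qed.

End bounded_density.

Theorem theorem3 (R : realType) (dS : measure_display) (S : measurableType dS)
  (A : set R) (P : S -> R -> probability S R) (r : S -> S -> R -> R)
  (gamma C mu : R) (V : S -> R) (pi : S -> R -> R) :
  measurable A ->
  (forall B, measurable B ->
     measurable_fun (setT `*` A) (fun sa : S * R => P sa.1 sa.2 B)) ->
  (forall s a, measurable_fun setT (fun s' => r s' s a)) ->
  (exists M, forall s' s a, `|r s' s a| <= M) ->
  0 <= gamma < 1 ->
  0 < mu ->
  measurable_fun setT V ->
  (exists M, forall s, `|V s| <= M) ->
  (forall s, bellman P r gamma A C mu V s = (V s)%:E) ->
  in_PiC A C pi ->
  (forall s, bellman P r gamma A C mu V s
             = bellman_obj A mu (Qfun P r gamma V) pi s) ->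
  (forall s, (lebesgue_measure (supp A pi s) < +oo)%E) ->
  (forall s, lebesgue_measure.-integrable (supp A pi s)
               (fun a => (Qfun P r gamma V s a)%:E)) ->
  (forall s a, A a ->
     pi s a = Num.max 0
       (Qfun P r gamma V s a / (2 * mu)
        - Rintegral lebesgue_measure (supp A pi s) (Qfun P r gamma V s)
            / (2 * mu * fine (lebesgue_measure (supp A pi s)))
        + 1 / fine (lebesgue_measure (supp A pi s)))) ->
  exists (eta : S -> R) (varpi : S -> R -> R),
    (forall s, - (mu * C) <= eta s <= 0) /\
    (forall s a, A a -> 0 <= varpi s a) /\
    (forall s a, A a -> varpi s a * pi s a = 0) /\
    (forall s a, A a ->
       Qfun P r gamma V s a - mu * (2 * pi s a - 1) - eta s + varpi s a = V s).
Proof.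
move=> mA _ _ _ _ mu0 _ _ V_fix pi_PiC pi_opt _ _ pi_induced.
set Q := Qfun P r gamma V.
pose c s := Rintegral lebesgue_measure (supp A pi s) (Q s)
            / fine (lebesgue_measure (supp A pi s))
          - 2 * mu / fine (lebesgue_measure (supp A pi s)).
pose J s := \int[lebesgue_measure]_(a in A) (pi s a ^+ 2).
have slack s a : A a -> (pi s a = 0 /\ Q s a <= c s) \/ Q s a = 2 * mu * pi s a + c s.
  by move=> Aa; rewrite pi_induced // induced_policyE ?gt_eqF //; exact: pos_part_slackness.
have VE s : V s = c s + mu + mu * J s.
  have [pi_mf [pi_bounds pi_int1]] := pi_PiC s.
  apply: EFin_inj; rewrite -V_fix pi_opt /bellman_obj.
  rewrite -(integral_affine_sqr_density (m := lebesgue_measure) mA pi_mf pi_bounds pi_int1).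
  apply: eq_integral => a /[!inE] Aa; congr EFin; rewrite -/Q.
  by case: (slack s a Aa) => [[-> _]|->]; ring.
exists (fun s => - (mu * J s)), (fun s a => c s + 2 * mu * pi s a - Q s a).
split; [|split; [|split]].
- move=> s; have [pi_mf [pi_bounds pi_int1]] := pi_PiC s.
  have /andP[J0 JC] :=
    Rintegral_sqr_density_bounds (m := lebesgue_measure) mA pi_mf pi_bounds pi_int1.
  by rewrite lerN2 oppr_le0 ler_pM2l // JC /= mulr_ge0 // ltW.
- by move=> s a Aa; case: (slack s a Aa) => [[-> ?]|->]; lra.
- by move=> s a Aa; case: (slack s a Aa) => [[-> _]|->]; [rewrite mulr0|ring].
- by move=> s a Aa; rewrite VE; ring.
Qed.
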